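(* Let $H$ be obtained from $E_{20}$ by adding a new vertex $v$ and joining it to three distinct vertices of $E_{20}$; let $S$ be the set of these three neighbours. If either every two vertices of $S$ are adjacent in $E_{20}$, or no two vertices of $S$ are adjacent in $E_{20}$, then $H$ contains $K_{3,4}$ or $F_4$ as a minor.
   Context: $E_{20}$ is the graph with vertex set $\{e^0,e^1_1,e^1_2,e^1_3,e^2,e^3_1,e^3_2,e^3_3,e^4\}$ and the 16 edges $e^0e^2$; $e^0e^1_i$ ($i=1,2,3$); $e^1_1e^1_2$, $e^1_2e^1_3$, $e^1_3e^1_1$; and, for $i=1,2,3$, $e^1_ie^3_i$, $e^2e^3_i$, $e^4e^3_i$. $F_4$ is the graph with vertex set $\{f^1,f^2\}\cup\{f^i_j: i\in\{1,2\}, j\in\{1,2,3,4\}\}$ and the 16 edges: for each $i\in\{1,2\}$, $f^if^i_1$, $f^if^i_2$, $f^if^i_4$, $f^i_3f^i_1$, $f^i_3f^i_2$, $f^i_3f^i_4$; and $f^1_jf^2_{5-j}$ for $j=1,2,3,4$. *)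

From mathcomp Require Import all_boot.
Set Implicit Arguments. Unset Strict Implicit. Unset Printing Implicit Defensive.

Definition adj_of_edges (n : nat) (es : seq (nat * nat)) : rel 'I_n :=
  fun x y => ((x : nat, y : nat) \in es) || ((y : nat, x : nat) \in es).

(* E_20 on 'I_9 with the encoding
   e^0 = 0, e^1_1 = 1, e^1_2 = 2, e^1_3 = 3, e^2 = 4,
   e^3_1 = 5, e^3_2 = 6, e^3_3 = 7, e^4 = 8. *)
Definition E20_edges : seq (nat * nat) :=
  [:: (0,4);
      (0,1); (0,2); (0,3);
      (1,2); (2,3); (3,1);
      (1,5); (2,6); (3,7);
      (4,5); (4,6); (4,7);
      (8,5); (8,6); (8,7)].
Definition E20_adj : rel 'I_9 := @adj_of_edges 9 E20_edges.

(* F_4 on 'I_10 with the encoding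
   f^1 = 0, f^2 = 1, f^1_j = 1 + j (j = 1..4), f^2_j = 5 + j (j = 1..4). *)
Definition F4_edges : seq (nat * nat) :=
  [:: (0,2); (0,3); (0,5); (4,2); (4,3); (4,5);
      (1,6); (1,7); (1,9); (8,6); (8,7); (8,9);
      (2,9); (3,8); (4,7); (5,6)].                (* f^1_j f^2_{5-j} *)
Definition F4_adj : rel 'I_10 := @adj_of_edges 10 F4_edges.

Definition K34_adj : rel 'I_7 := fun x y => (x < 3) != (y < 3).

Definition H_adj (S : {set 'I_9}) : rel (option 'I_9) :=
  fun x y =>
    match x, y with
    | Some a, Some b => E20_adj a b
    | None, Some b => b \in S
    | Some a, None => a \in S
    | None, None => false
    end.

Definition connected_in (T : finType) (e : rel T) (A : {set T}) : Prop :=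
  forall u v, u \in A -> v \in A ->
    connect [rel a b | [&& a \in A, b \in A & e a b]] u v.

Definition is_minor (G : finType) (eG : rel G) (T : finType) (eH : rel T) : Prop :=
  exists f : G -> {set T},
    [/\ forall x, f x != set0,
        forall x y, x != y -> [disjoint f x & f y],
        forall x, connected_in eH (f x)
      & forall x y, eG x y -> exists u v, [/\ u \in f x, v \in f y & eH u v]].

From Pilot Require Import Defs.
From mathcomp Require Import all_boot.
Set Implicit Arguments. Unset Strict Implicit. Unset Printing Implicit Defensive.

(* The hypothesis leaves 14 possibilities for S: the 4 triangles and the 10
   independent triples of E_20.  When S is a triangle through e^0, F_4 is a
   spanning subgraph of H; in the other 11 cases branch sets of at most three
   vertices give a K_{3,4} minor.  Each model is verified by evaluating a
   boolean certificate for [is_minor]. *)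

Section MinorCertificate.

Variables (G T : finType) (eG : rel G) (eH : rel T).

Definition grow (A R : seq T) : seq T := R ++ [seq y <- A | has (eH^~ y) R].

Definition reach_within (A : seq T) (u : T) : seq T := iter (size A) (grow A) [:: u].

Lemma reach_within_connect (A : seq T) u v :
  u \in A -> v \in reach_within A u ->
  (v \in A) && connect [rel a b | [&& a \in A, b \in A & eH a b]] u v.
Proof.
move=> uA; rewrite /reach_within; elim: (size A) v => [|k IHk] v /=.
  by rewrite inE => /eqP ->; rewrite uA connect0.
rewrite {1}/grow mem_cat => /orP [/IHk //|].
rewrite mem_filter => /andP [/hasP [w /IHk /andP [wA uw] ewv] vA].
by rewrite vA (connect_trans uw) // connect1 //= wA vA.
Qed.

Definition minor_certificate (gs : seq G) (f : G -> seq T) : bool :=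
  [&& all (fun x => f x != [::]) gs,
      all (fun x => all (fun y => (x != y) ==> ~~ has (mem (f y)) (f x)) gs) gs,
      all (fun x => all (fun u => all (fun v => v \in reach_within (f x) u) (f x)) (f x)) gs
    & all (fun x => all (fun y =>
        eG x y ==> has (fun u => has (eH u) (f y)) (f x)) gs) gs].

Lemma minor_certificate_sound gs f :
  (forall x, x \in gs) -> minor_certificate gs f -> is_minor eG eH.
Proof.
move=> gsP /and4P [/allP nz /allP dis /allP con /allP adj].
exists (fun x => [set u in f x]); split=> [x|x y xy|x u v|x y exy].
- apply/set0Pn; case: (f x) (nz x (gsP x)) => // u s _.
  by exists u; rewrite inE mem_head.
- move/allP/(_ y (gsP y)): (dis x (gsP x)); rewrite xy /= => /hasPn fxy.
  by rewrite disjoint_subset; apply/subsetP => u; rewrite !inE => /fxy.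
- rewrite !inE => ux vx; have /allP/(_ u ux)/allP/(_ v vx) := con x (gsP x).
  move=> /(reach_within_connect ux) /andP [_].
  rewrite (@eq_connect _ _ [rel a b | [&& a \in f x, b \in f x & eH a b]]) //.
  by move=> a b /=; rewrite !inE.
- move/allP/(_ y (gsP y)): (adj x (gsP x)); rewrite exy.
  by case/hasP=> u ux /hasP [v vy euv]; exists u, v; rewrite !inE.
Qed.

End MinorCertificate.

Lemma eq_is_minor (G T : finType) (eG : rel G) (eH eH' : rel T) :
  eH =2 eH' -> is_minor eG eH -> is_minor eG eH'.
Proof.
move=> eqH [f [nz dis con adj]]; exists f; split=> // [x u v ux vx|x y /adj [u [v [ux vy]]]].
  rewrite -(@eq_connect _ [rel a b | [&& a \in f x, b \in f x & eH a b]]) ?con //.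
  by move=> a b /=; rewrite eqH.
by rewrite eqH => euv; exists u, v.
Qed.

Definition cone (T : Type) (e : rel T) (N : pred T) : rel (option T) :=
  fun x y =>
    match x, y with
    | Some a, Some b => e a b
    | None, Some b => N b
    | Some a, None => N a
    | None, None => false
    end.

Lemma H_adj_cone (S : {set 'I_9}) (s : seq 'I_9) :
  S =i s -> H_adj S =2 cone E20_adj (mem s).
Proof. by move=> Ss [a|] [b|] //=; rewrite Ss. Qed.

Definition clique (T : eqType) (e : rel T) (s : seq T) : bool :=
  all (fun x => all (fun y => (x != y) ==> e x y) s) s.

Definition stable (T : eqType) (e : rel T) (s : seq T) : bool :=
  all (fun x => all (fun y => ~~ e x y) s) s.

Lemma cliqueP (T : eqType) (e : rel T) (s : seq T) :
  reflect {in s &, forall x y, x != y -> e x y} (clique e s).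
Proof.
apply: (iffP allP) => [h x y xs ys xy | h x xs].
  by move/allP/(_ y ys)/implyP: (h x xs); apply.
by apply/allP => y ys; apply/implyP; apply: h.
Qed.

Lemma stableP (T : eqType) (e : rel T) (s : seq T) :
  reflect {in s &, forall x y, ~~ e x y} (stable e s).
Proof.
apply: (iffP allP) => [h x y xs ys | h x xs].
  by move/allP/(_ y ys): (h x xs).
by apply/allP => y ys; apply: h.
Qed.

(* [insub] does not reduce under [vm_compute] (it goes through the opaque
   [idP]); its transparent variant [insub_eq] does. *)
Definition ords (n : nat) : seq 'I_n := pmap (insub_eq 'I_n) (iota 0 n).

Lemma mem_ords n (x : 'I_n) : x \in ords n.
Proof. by rewrite /ords (eq_pmap (insub_eqE _)) -/(ord_enum n) mem_ord_enum. Qed.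

(* A model lists the vertex codes of each branch set; code 9 is the new
   vertex v (= None), the codes 0..8 are those of E_20 fixed in Defs. *)
Definition branch (n : nat) (bs : seq (seq nat)) (x : 'I_n) : seq (option 'I_9) :=
  map (insub_eq 'I_9) (nth [::] bs x).

Definition model_fits (n : nat) (eG : rel 'I_n) (s : seq 'I_9)
    (m : seq nat * seq (seq nat)) : bool :=
  perm_eq (map val s) m.1 &&
  minor_certificate eG (cone E20_adj (mem s)) (ords n) (branch m.2).

Definition F4_models : seq (seq nat * seq (seq nat)) :=
  [:: ([:: 0; 1; 2], [:: [:: 8]; [:: 9]; [:: 5]; [:: 7]; [:: 4]; [:: 6]; [:: 2]; [:: 0]; [:: 3]; [:: 1]]);
      ([:: 0; 1; 3], [:: [:: 8]; [:: 9]; [:: 5]; [:: 6]; [:: 4]; [:: 7]; [:: 3]; [:: 0]; [:: 2]; [:: 1]]);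
      ([:: 0; 2; 3], [:: [:: 8]; [:: 9]; [:: 6]; [:: 5]; [:: 4]; [:: 7]; [:: 3]; [:: 0]; [:: 1]; [:: 2]])].

Definition K34_models : seq (seq nat * seq (seq nat)) :=
  [:: ([:: 0; 5; 6], [:: [:: 5]; [:: 6]; [:: 0; 3]; [:: 4]; [:: 9]; [:: 1; 2]; [:: 7; 8]]);
      ([:: 0; 5; 7], [:: [:: 5]; [:: 7]; [:: 0; 2]; [:: 4]; [:: 9]; [:: 1; 3]; [:: 6; 8]]);
      ([:: 0; 6; 7], [:: [:: 6]; [:: 7]; [:: 0; 1]; [:: 4]; [:: 9]; [:: 2; 3]; [:: 5; 8]]);
      ([:: 1; 2; 3], [:: [:: 1; 5]; [:: 2; 6]; [:: 3; 7]; [:: 0]; [:: 4]; [:: 8]; [:: 9]]);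
      ([:: 1; 4; 8], [:: [:: 4]; [:: 8]; [:: 1; 2]; [:: 5]; [:: 6]; [:: 9]; [:: 3; 7]]);
      ([:: 1; 6; 7], [:: [:: 6]; [:: 7]; [:: 1; 5]; [:: 4]; [:: 8]; [:: 9]; [:: 2; 3]]);
      ([:: 2; 4; 8], [:: [:: 4]; [:: 8]; [:: 1; 2]; [:: 5]; [:: 6]; [:: 9]; [:: 3; 7]]);
      ([:: 2; 5; 7], [:: [:: 5]; [:: 7]; [:: 2; 6]; [:: 4]; [:: 8]; [:: 9]; [:: 1; 3]]);
      ([:: 3; 4; 8], [:: [:: 4]; [:: 8]; [:: 1; 2; 3]; [:: 5]; [:: 6]; [:: 7]; [:: 9]]);
      ([:: 3; 5; 6], [:: [:: 5]; [:: 6]; [:: 3; 7]; [:: 4]; [:: 8]; [:: 9]; [:: 1; 2]]);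
      ([:: 5; 6; 7], [:: [:: 5]; [:: 6]; [:: 3; 7]; [:: 4]; [:: 8]; [:: 9]; [:: 1; 2]])].

Definition has_model (s : seq 'I_9) : bool :=
  has (model_fits K34_adj s) K34_models || has (model_fits F4_adj s) F4_models.

Lemma has_model_minor s :
  has_model s ->
  is_minor K34_adj (cone E20_adj (mem s)) \/ is_minor F4_adj (cone E20_adj (mem s)).
Proof.
by case/orP=> /hasP [m _ /andP [_ cert]]; [left|right];
  apply: minor_certificate_sound cert; apply: mem_ords.
Qed.

Definition triples : seq (seq 'I_9) :=
  [seq a :: bc | a <- ords 9, bc <- [seq [:: b; c] | b <- ords 9, c <- ords 9]].

Lemma mem_triples a b c : [:: a; b; c] \in triples.
Proof. by rewrite allpairs_f ?mem_ords // allpairs_f ?mem_ords. Qed.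

Lemma clique_or_stable_triples_have_models :
  all has_model [seq s <- triples | uniq s && (clique E20_adj s || stable E20_adj s)].
Proof. by vm_compute. Qed.

Theorem lemma4p5 (S : {set 'I_9}) :
  #|S| = 3 ->
  ((forall x y, x \in S -> y \in S -> x != y -> E20_adj x y) \/
   (forall x y, x \in S -> y \in S -> ~~ E20_adj x y)) ->
  is_minor K34_adj (H_adj S) \/ is_minor F4_adj (H_adj S).
Proof.
move=> cardS hS.
have Ss : S =i enum S by move=> x; rewrite mem_enum.
have cs : clique E20_adj (enum S) || stable E20_adj (enum S).
  by case: hS => h; apply/orP; [left; apply/cliqueP | right; apply/stableP];
    move=> x y; rewrite -!Ss; apply: h.
have /has_model_minor : has_model (enum S).
  move: (enum_uniq (mem S)) cs (cardE S); rewrite cardS.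
  case: (enum S) => [|a [|b [|c [|]]]] // uabc cs _.
  apply: (allP clique_or_stable_triples_have_models).
  by rewrite mem_filter uabc cs mem_triples.
by case=> h; [left|right]; apply: eq_is_minor h => u w; rewrite (H_adj_cone Ss).
Qed.
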